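(* Let $N,M\ge1$, $\mathcal H_+=\mathbb C^N$, $\mathcal H_-=\mathbb C^M$, $\mathcal H=\mathcal H_+\oplus\mathcal H_-$. Fix $b>0$ and $d_1,\dots,d_M\in i\mathbb R$, and put $B=\mathrm{diag}(b,0,\dots,0)$ ($N\times N$) and $D=\mathrm{diag}(d_1,\dots,d_M)$. For $\alpha=(\alpha_1,\dots,\alpha_M)\in\mathbb C^M$ with $|\alpha_1|^2+\dots+|\alpha_M|^2=1$, let $u$ be the $M\times N$ matrix whose first column is $\alpha$ and whose other columns are zero, and let $$\mu=\begin{pmatrix}0&-Bu^*\\ uB&D\end{pmatrix}.$$ Then for all integers $n\ge1$ and $1\le k\le n+1$ there exist polynomials $p^n_{j,k}$, $j=1,\dots,M$, in $M$ variables with real coefficients depending smoothly on $b,d_1,\dots,d_M$, such that for all such $\alpha$ the matrix $i^{n+1}(\mu H^{n-1}_{k-1}(\mu))_{--}u$ has first column with entries $i\,p^n_{j,k}(|\alpha_1|^2,\dots,|\alpha_M|^2)\,\alpha_j$ ($j=1,\dots,M$) and all other columns zero. Equivalently, the equation $\frac{\partial}{\partial t^n_k}u=i^{n+1}(\mu H^{n-1}_{k-1}(\mu))_{--}u$ becomes $$\frac{\partial}{\partial t^n_k}\alpha_j=i\,p^n_{j,k}(|\alpha_1|^2,\dots,|\alpha_M|^2)\,\alpha_j,\qquad j=1,\dots,M.$$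
   Context: $P_+$ and $P_-$ denote the orthogonal projectors of $\mathcal H$ onto $\mathcal H_+$ and $\mathcal H_-$; for an operator $X$ on $\mathcal H$, $X_{--}$ denotes the block $P_-XP_-$ regarded as an operator on $\mathcal H_-$. For integers $m\ge 0$ and $0\le l\le m+1$ and a matrix $\mu$ on $\mathcal H$, define $$H^m_l(\mu)=\sum_{\substack{i_0,\dots,i_m\in\{0,1\}\\ i_0+\dots+i_m=l}} P_+^{i_0}\mu P_+^{i_1}\mu\cdots\mu P_+^{i_m},$$ with $P_+^0=I$ the identity and $P_+^1=P_+$. *)

From HB Require Import structures.
From mathcomp Require Import all_boot all_order all_algebra.
From mathcomp Require Import all_classical all_reals all_analysis.
From mathcomp Require Import complex.
Set Implicit Arguments. Unset Strict Implicit. Unset Printing Implicit Defensive.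
Import Order.TTheory GRing.Theory Num.Theory.
Import numFieldNormedType.Exports.
Local Open Scope ring_scope.
Local Open Scope complex_scope.

(* H = C^N (+) C^M realized as C^(N+M); block matrices via block_mx. *)

Definition Pplus (C : pzRingType) (N M : nat) : 'M[C]_(N + M) :=
  block_mx 1%:M 0 0 0.

Definition Ppow (C : pzRingType) (N M : nat) (i : bool) : 'M[C]_(N + M) :=
  if i then Pplus C N M else 1%:M.
Arguments Ppow {C} N M i.

(* H^m_l(mu) = sum over (i_0,...,i_m) in {0,1}^{m+1} with i_0+...+i_m = l of
   P_+^{i_0} mu P_+^{i_1} mu ... mu P_+^{i_m}. *)
Definition Hml (C : pzRingType) (N M : nat) (m l : nat) (mu : 'M[C]_(N + M))
  : 'M[C]_(N + M) :=
  \sum_(s : {ffun 'I_m.+1 -> bool} | (\sum_(j < m.+1) nat_of_bool (s j))%N == l)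
     (Ppow N M (s ord0) *m
      \big[mulmx/1%:M]_(j < m) (mu *m Ppow N M (s (lift ord0 j)))).

(* X_{--} = P_- X P_- regarded as an operator on H_- : the lower-right block. *)
Arguments Hml {C} N M m l mu.

Definition minus_block (C : pzRingType) (N M : nat) (X : 'M[C]_(N + M)) : 'M[C]_M :=
  drsubmx X.

Definition mu_mx (R : rcfType) (N M : nat) (B : 'M[R[i]]_N) (D : 'M[R[i]]_M)
  (u : 'M[R[i]]_(M, N)) : 'M[R[i]]_(N + M) :=
  block_mx 0 (- (B *m (map_mx conjc u^T))) (u *m B) D.

Fixpoint iter_partial (R : realType) (m : nat) (s : seq 'I_m)
  (f : 'rV[R]_m -> R^o) : 'rV[R]_m -> R^o :=
  match s with
  | [::] => f
  | i :: s' => fun x => 'D_(delta_mx 0 i) (iter_partial s' f) x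
  end.

Definition smooth_on (R : realType) (m : nat) (U : set 'rV[R]_m)
  (f : 'rV[R]_m -> R^o) : Prop :=
  forall (s : seq 'I_m) (x : 'rV[R]_m), U x ->
    (forall i : 'I_m, derivable (iter_partial s f) x (delta_mx 0 i)) /\
    {for x, continuous (iter_partial s f)}.

(* A polynomial in M variables with real coefficients, given by the family of
   coefficients c e of the monomials X^e, e ranging over exponents < K,
   evaluated at a point y (embedded in C). *)
Definition poly_evalC (R : rcfType) (M K : nat) (c : {ffun 'I_M -> 'I_K} -> R)
  (y : 'I_M -> R[i]) : R[i] :=
  \sum_(e : {ffun 'I_M -> 'I_K}) ((c e)%:C * \prod_(j < M) y j ^+ (e j)).

From HB Require Import structures.
From mathcomp Require Import all_boot all_order all_algebra.
From mathcomp Require Import all_classical all_reals all_analysis.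
From mathcomp Require Import complex.
From mathcomp Require Import ring.
Import Order.TTheory GRing.Theory Num.Theory.
Import numFieldNormedType.Exports.
Local Open Scope ring_scope.
Local Open Scope complex_scope.

(* Write y_j = |alpha_j|^2.  Call a vector of H shaped at level t if its H_+
   part is i^(t+1) C(y) e_1 and its H_- part is (i^t L_j(y) alpha_j)_j, where
   C and the L_j are real polynomials in y whose coefficients are polynomials
   in the parameters b, d.  P_+ keeps this shape, and mu raises the level by
   one: the H_- part enters the H_+ part only through u^*, which turns
   (L_j alpha_j)_j into sum_j conj(alpha_j) L_j alpha_j = sum_j y_j L_j, and
   i^(t+2) = - i^t.  Starting from (0, alpha) at level 0, the vector
   mu H^(n-1)_(k-1)(mu) (0, alpha) is shaped at level n, so its H_- part is
   i^n L_j(y) alpha_j, and i^(n+1) i^n = i (-1)^n. *)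

Set Implicit Arguments. Unset Strict Implicit. Unset Printing Implicit Defensive.

Section PolynomialFunctions.
Variables (R : realType) (m : nat).

Inductive polynomial_fun : ('rV[R]_m -> R^o) -> Prop :=
| polynomial_cst (c : R) : polynomial_fun (fun _ => c)
| polynomial_coord (i : 'I_m) : polynomial_fun (fun x => x ord0 i)
| polynomial_add f g :
    polynomial_fun f -> polynomial_fun g -> polynomial_fun (fun x => f x + g x)
| polynomial_mul f g :
    polynomial_fun f -> polynomial_fun g -> polynomial_fun (fun x => f x * g x).

Lemma coord_is_derive (i : 'I_m) (x v : 'rV[R]_m) :
  is_derive x v (fun y : 'rV[R]_m => (y ord0 i : R^o)) (v ord0 i).
Proof.
have hd : derivable (@id 'rV[R]_m) x v by exact: derivable_id.
have := derive_mx hd; rewrite derive_val => /matrixP /(_ ord0 i); rewrite mxE => e.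
apply: DeriveDef; last by rewrite -e.
by move/derivable_mxP: hd => /(_ ord0 i).
Qed.

Lemma polynomial_fun_is_derive f v : polynomial_fun f ->
  exists2 g, polynomial_fun g & forall x, is_derive x v f (g x).
Proof.
elim=> [c|i|f1 g1 _ [df pf hf] _ [dg pg hg]|f1 g1 pf1 [df pf hf] pg1 [dg pg hg]].
- by exists (fun _ => 0) => [|x]; [exact: polynomial_cst|exact: is_derive_cst].
- by exists (fun _ => v ord0 i) => [|x]; [exact: polynomial_cst|exact: coord_is_derive].
- exists (fun x => df x + dg x) => [|x]; first exact: polynomial_add.
  exact: is_deriveD.
- exists (fun x => f1 x * dg x + g1 x * df x) => [|x].
    by apply: polynomial_add; apply: polynomial_mul.
  exact: is_deriveM.
Qed.

Lemma polynomial_fun_continuous f : polynomial_fun f -> continuous f.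
Proof.
elim=> [c|i|f1 g1 _ IHf _ IHg|f1 g1 _ IHf _ IHg] x.
- exact: cst_continuous.
- exact: coord_continuous.
- exact: (continuousD (IHf x) (IHg x)).
- exact: (continuousM (IHf x) (IHg x)).
Qed.

Lemma polynomial_fun_iter_partial s f :
  polynomial_fun f -> polynomial_fun (iter_partial s f).
Proof.
move=> pf; elim: s => [|i s IH] //=.
have [g pg hg] := polynomial_fun_is_derive (delta_mx 0 i) IH.
suff -> : (fun x => 'D_(delta_mx 0 i) (iter_partial s f) x) = g by [].
by apply/funext => x; rewrite derive_val.
Qed.

Lemma polynomial_fun_smooth_on U f : polynomial_fun f -> smooth_on U f.
Proof.
move=> pf s x _; have ps := polynomial_fun_iter_partial s pf; split.
  by move=> i; have [g _ /(_ x) []] := polynomial_fun_is_derive (delta_mx 0 i) ps.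
exact: polynomial_fun_continuous.
Qed.

Lemma polynomial_fun_sum n (g : 'I_n -> 'rV[R]_m -> R) :
  (forall p, polynomial_fun (g p)) -> polynomial_fun (fun x => \sum_(p < n) g p x).
Proof.
elim: n g => [|n IH] g hg.
  under eq_fun do rewrite big_ord0; exact: polynomial_cst.
under eq_fun do rewrite big_ord_recr /=.
by apply: polynomial_add; [apply: IH|].
Qed.

End PolynomialFunctions.

Section ParametricPolynomials.
Variables (R : realType) (m M K : nat).

Local Notation exponent := {ffun 'I_M -> 'I_K.+1}.

(* A polynomial in y_1, ..., y_M with exponents at most K, whose coefficients
   are functions of the parameters x. *)
Definition pcoef := exponent -> 'rV[R]_m -> R.
Implicit Types (c d : pcoef) (e : exponent).

Definition peval (c : pcoef) x (y : 'I_M -> R[i]) := poly_evalC (c ^~ x) y.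

Definition pcoef_deg_lt t (c : pcoef) :=
  (forall e, polynomial_fun (c e)) /\ (forall (e : exponent) j x, (t <= e j)%N -> c e x = 0).

Definition pcoef0 : pcoef := fun _ _ => 0.
Definition pcoef1 : pcoef := fun e _ => (e == [ffun => ord0])%:R.
Definition pcoefD (c d : pcoef) : pcoef := fun e x => c e x + d e x.
Definition pcoefZ (f : 'rV[R]_m -> R) (c : pcoef) : pcoef := fun e x => f x * c e x.
Definition pcoef_sum n (c : 'I_n -> pcoef) : pcoef := fun e x => \sum_(p < n) c p e x.

Definition exponent_incr (j : 'I_M) (e : exponent) : exponent :=
  [ffun i => if i == j then ordS (e i) else e i].
Definition exponent_decr (j : 'I_M) (e : exponent) : exponent :=
  [ffun i => if i == j then ord_pred (e i) else e i].

Lemma exponent_incrK j : cancel (exponent_incr j) (exponent_decr j).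
Proof. by move=> e; apply/ffunP => i; rewrite !ffunE; case: eqP => // ->; rewrite ordSK. Qed.

(* Multiplication by y_j.  Since exponent_incr wraps around at K, this is only
   correct when c has degree < K in y_j (see pevalX). *)
Definition pcoefX (j : 'I_M) (c : pcoef) : pcoef :=
  fun e x => if e j == ord0 then 0 else c (exponent_decr j e) x.

Lemma peval0 x y : peval pcoef0 x y = 0.
Proof. by rewrite /peval /poly_evalC big1 // => e _; rewrite mul0r. Qed.

Lemma peval1 x y : peval pcoef1 x y = 1.
Proof.
rewrite /peval /poly_evalC (bigD1 [ffun => ord0]) //= [X in _ + X]big1 => [|e ne].
  by rewrite /pcoef1 eqxx mul1r addr0 big1 // => j _; rewrite ffunE expr0.
by rewrite /pcoef1 (negbTE ne) mul0r.
Qed.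

Lemma pevalD c d x y : peval (pcoefD c d) x y = peval c x y + peval d x y.
Proof.
by rewrite /peval /poly_evalC -big_split; apply: eq_bigr => e _; rewrite rmorphD mulrDl.
Qed.

Lemma pevalZ f c x y : peval (pcoefZ f c) x y = (f x)%:C * peval c x y.
Proof.
by rewrite /peval /poly_evalC mulr_sumr; apply: eq_bigr => e _; rewrite rmorphM mulrA.
Qed.

Lemma peval_sum n (c : 'I_n -> pcoef) x y :
  peval (pcoef_sum c) x y = \sum_(p < n) peval (c p) x y.
Proof.
rewrite /peval /poly_evalC exchange_big; apply: eq_bigr => e _.
by rewrite rmorph_sum mulr_suml.
Qed.

Lemma pevalX j c x y : (forall e, e j = ord_max -> c e x = 0) ->
  peval (pcoefX j c) x y = y j * peval c x y.
Proof.
move=> c_top; rewrite /peval /poly_evalC mulr_sumr.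
rewrite (reindex_inj (can_inj (@exponent_incrK j))); apply: eq_bigr => e _.
rewrite /pcoefX exponent_incrK.
have [ej|nej] := eqVneq (e j) ord_max.
  by rewrite c_top // if_same rmorph0 !mul0r mulr0.
have ej_lt : (e j < K)%N.
  rewrite ltn_neqAle -ltnS ltn_ord andbT.
  by apply: contra nej => /eqP ej; apply/eqP/val_inj.
have incr_j : nat_of_ord (exponent_incr j e j) = (e j).+1.
  by rewrite ffunE eqxx /= modn_small.
rewrite -val_eqE /= incr_j mulrCA; congr (_ * _).
rewrite (bigD1 j) //= [in RHS](bigD1 j) //= mulrA incr_j exprS; congr (_ * _).
by apply: eq_bigr => i /negbTE ni; rewrite ffunE ni.
Qed.

Lemma pcoef_deg_lt0 t : pcoef_deg_lt t pcoef0.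
Proof. by split=> *; [exact: polynomial_cst|]. Qed.

Lemma pcoef_deg_lt1 : pcoef_deg_lt 1 pcoef1.
Proof.
split=> [e|e j x]; first exact: polynomial_cst.
by rewrite /pcoef1; case: eqP => // ->; rewrite ffunE.
Qed.

Lemma pcoef_deg_ltW t t' c : (t <= t')%N -> pcoef_deg_lt t c -> pcoef_deg_lt t' c.
Proof. by move=> tt' [pc c0]; split=> // e j x /(leq_trans tt'); apply: c0. Qed.

Lemma pcoef_deg_ltD t c d :
  pcoef_deg_lt t c -> pcoef_deg_lt t d -> pcoef_deg_lt t (pcoefD c d).
Proof.
move=> [pc c0] [pd d0]; split=> [e|e j x te]; first exact: polynomial_add.
by rewrite /pcoefD (c0 e j) ?(d0 e j) ?addr0.
Qed.

Lemma pcoef_deg_ltZ t f c :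
  polynomial_fun f -> pcoef_deg_lt t c -> pcoef_deg_lt t (pcoefZ f c).
Proof.
move=> pf [pc c0]; split=> [e|e j x te]; first exact: polynomial_mul.
by rewrite /pcoefZ (c0 e j) ?mulr0.
Qed.

Lemma pcoef_deg_lt_sum t n (c : 'I_n -> pcoef) :
  (forall p, pcoef_deg_lt t (c p)) -> pcoef_deg_lt t (pcoef_sum c).
Proof.
move=> hc; split=> [e|e j x te]; first by apply: polynomial_fun_sum => p; case: (hc p).
by rewrite /pcoef_sum big1 // => p _; case: (hc p) => _ /(_ e j x te).
Qed.

Lemma pcoef_deg_ltX t j c : pcoef_deg_lt t c -> pcoef_deg_lt t.+1 (pcoefX j c).
Proof.
move=> [pc c0]; split=> [e|e j' x te]; rewrite /pcoefX.
  by case: (e j == ord0); [exact: polynomial_cst|exact: pc].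
case: ifP => // _; apply: (c0 _ j'); rewrite ffunE.
case: eqP te => [->|_]; last exact: ltnW.
case: (e j) => [[|s] lt_sK] //= lt_ts.
by rewrite modnDr modn_small // ltnW.
Qed.

End ParametricPolynomials.

Arguments pcoef0 {R m M K}.
Arguments pcoef1 {R m M K}.

Lemma drsubmx_mul_col (T : pzRingType) m n (X : 'M[T]_(m + n)) (v : 'cV[T]_n) :
  drsubmx X *m v = dsubmx (X *m col_mx 0 v).
Proof. by rewrite -[in RHS](submxK X) mul_block_col !mulmx0 !add0r col_mxKd. Qed.

Section MuAction.
Variables (R : realType) (N M K : nat).
Implicit Types (x : 'rV[R]_M.+1) (a : 'I_M -> R[i]).

Local Notation pcoef := (pcoef R M.+1 M K).

(* The parameter vector is x = (b, -i d_1, ..., -i d_M). *)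
Definition param_b x : R := x ord0 ord0.
Definition param_d (p : 'I_M) x : R := x ord0 (lift ord0 p).

Definition Bmx x : 'M[R[i]]_N.+1 :=
  \matrix_(p, q) (if (p == q) && (nat_of_ord p == 0%N) then (param_b x)%:C else 0).
Definition Dmx x : 'M[R[i]]_M :=
  \matrix_(p, q) (if p == q then 'i%C * (param_d p x)%:C else 0).
Definition Umx a : 'M[R[i]]_(M, N.+1) :=
  \matrix_(p, q) (if nat_of_ord q == 0%N then a p else 0).
Definition mu_at x a := mu_mx (Bmx x) (Dmx x) (Umx a).

Definition sqnorms a : 'I_M -> R[i] := fun j => `|a j| ^+ 2.

Definition shaped_vec t (C : pcoef) (L : 'I_M -> pcoef) x a : 'cV[R[i]]_(N.+1 + M) :=
  col_mx (\col_q (if nat_of_ord q == 0%N then 'i%C ^+ t.+1 * peval C x (sqnorms a) else 0))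
         (\col_p ('i%C ^+ t * peval (L p) x (sqnorms a) * a p)).

Lemma shaped_vec0 t x a : shaped_vec t pcoef0 (fun=> pcoef0) x a = 0.
Proof.
apply/matrixP => i j; rewrite !mxE.
by case: splitP => k _; rewrite !mxE peval0 ?mulr0 ?mul0r ?if_same.
Qed.

Lemma shaped_vecD t C1 L1 C2 L2 x a :
  shaped_vec t C1 L1 x a + shaped_vec t C2 L2 x a =
  shaped_vec t (pcoefD C1 C2) (fun p => pcoefD (L1 p) (L2 p)) x a.
Proof.
rewrite add_col_mx; congr col_mx; apply/matrixP => i j; rewrite !mxE pevalD.
  by case: ifP; rewrite ?addr0 // mulrDr.
by rewrite mulrDr mulrDl.
Qed.

Lemma Pplus_shaped_vec t C L x a :
  Pplus _ N.+1 M *m shaped_vec t C L x a = shaped_vec t C (fun=> pcoef0) x a.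
Proof.
rewrite mul_block_col !mul0mx mul1mx !addr0; congr col_mx.
by apply/matrixP => i j; rewrite !mxE peval0 mulr0 mul0r.
Qed.

Lemma Bmx_mul_col x (v : 'cV[R[i]]_N.+1) :
  Bmx x *m v = \col_q (if nat_of_ord q == 0%N then (param_b x)%:C * v ord0 ord0 else 0).
Proof.
apply/matrixP => q j; rewrite !mxE (big_only1 q) ?mxE ?eqxx //=.
  case: eqP => q0; rewrite ?mul0r // [j]ord1 (_ : q = ord0) //; exact: val_inj.
by move=> r /negPf qr _; rewrite mxE eq_sym qr mul0r.
Qed.

Lemma Umx_mul_col a (v : 'cV[R[i]]_N.+1) : Umx a *m v = \col_p (a p * v ord0 ord0).
Proof.
apply/matrixP => p j; rewrite [j]ord1 !mxE (big_only1 ord0) ?mxE //= => q /negPf q0 _.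
by rewrite mxE -val_eqE /= in q0 *; rewrite q0 mul0r.
Qed.

Lemma adj_Umx_mul_col a (w : 'cV[R[i]]_M) :
  map_mx conjc (Umx a)^T *m w =
  \col_q (if nat_of_ord q == 0%N then \sum_r conjc (a r) * w r ord0 else 0).
Proof.
apply/matrixP => q j; rewrite [j]ord1 !mxE.
under eq_bigr => r _ do rewrite !mxE.
by case: ifP => _; last by rewrite big1 // => r _; rewrite conjc0 mul0r.
Qed.

Lemma mulmx_Umx k (A : 'M[R[i]]_(k, M)) a :
  A *m Umx a = \matrix_(p, q) (if nat_of_ord q == 0%N then (A *m \col_r a r) p ord0 else 0).
Proof.
apply/matrixP => p q; rewrite !mxE; under eq_bigr => r _ do rewrite !mxE.
case: ifP => _; last by rewrite big1 // => r _; rewrite mulr0.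
by apply: eq_bigr => r _; rewrite mxE.
Qed.

Lemma Dmx_mul_col x (w : 'cV[R[i]]_M) :
  Dmx x *m w = \col_p ('i%C * (param_d p x)%:C * w p ord0).
Proof.
apply/matrixP => p j; rewrite [j]ord1 !mxE (big_only1 p) ?mxE ?eqxx //=.
by move=> r /negPf pr _; rewrite mxE eq_sym pr mul0r.
Qed.

Definition mu_top_coef (L : 'I_M -> pcoef) : pcoef :=
  pcoefZ param_b (pcoef_sum (fun p => pcoefX p (L p))).
Definition mu_bottom_coef (C : pcoef) (L : 'I_M -> pcoef) (p : 'I_M) : pcoef :=
  pcoefD (pcoefZ param_b C) (pcoefZ (param_d p) (L p)).

Lemma mu_shaped_vec t C (L : 'I_M -> pcoef) x a :
  (forall p (e : {ffun 'I_M -> 'I_K.+1}), e p = ord_max -> L p e x = 0) ->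
  mu_at x a *m shaped_vec t C L x a =
  shaped_vec t.+1 (mu_top_coef L) (mu_bottom_coef C L) x a.
Proof.
move=> L_top; rewrite /mu_at /mu_mx mul_block_col mul0mx add0r.
rewrite mulNmx -!mulmxA adj_Umx_mul_col !Bmx_mul_col Umx_mul_col Dmx_mul_col.
congr col_mx; apply/matrixP => q j; rewrite !mxE.
  case: ifP => _; last by rewrite oppr0.
  rewrite pevalZ peval_sum mulr_sumr mulr_sumr -sumrN mulr_sumr; apply: eq_bigr => r _.
  rewrite mxE pevalX; last exact: L_top.
  have i_t2 : 'i%C ^+ t.+2 = - 'i%C ^+ t :> R[i] by rewrite -addn2 exprD sqr_i mulrN1.
  by rewrite /sqnorms (sqr_normc (a r)) i_t2; ring.
by rewrite /= pevalD !pevalZ exprS; ring.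
Qed.

Definition shaped t (W : 'rV[R]_M.+1 -> ('I_M -> R[i]) -> 'cV[R[i]]_(N.+1 + M)) :=
  exists C L, [/\ pcoef_deg_lt t.+1 C, forall p, pcoef_deg_lt t.+1 (L p)
                & forall x a, W x a = shaped_vec t C L x a].

Lemma shaped_ext t W W' : (forall x a, W x a = W' x a) -> shaped t W -> shaped t W'.
Proof. by move=> eqW [C [L [? ? eqWC]]]; exists C, L; split=> // x a; rewrite -eqW. Qed.

Lemma shaped0 t : shaped t (fun _ _ => 0).
Proof.
exists pcoef0, (fun=> pcoef0); split=> [||x a]; rewrite ?shaped_vec0 //.
  exact: pcoef_deg_lt0.
by move=> p; exact: pcoef_deg_lt0.
Qed.

Lemma shapedD t W1 W2 :
  shaped t W1 -> shaped t W2 -> shaped t (fun x a => W1 x a + W2 x a).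
Proof.
move=> [C1 [L1 [C1_deg L1_deg eqW1]]] [C2 [L2 [C2_deg L2_deg eqW2]]].
exists (pcoefD C1 C2), (fun p => pcoefD (L1 p) (L2 p)); split.
- exact: pcoef_deg_ltD.
- by move=> p; apply: pcoef_deg_ltD.
- by move=> x a; rewrite eqW1 eqW2 shaped_vecD.
Qed.

Lemma shaped_sum t (I : Type) (r : seq I) (P : pred I) F :
  (forall s, shaped t (F s)) -> shaped t (fun x a => \sum_(s <- r | P s) F s x a).
Proof.
move=> shF; elim: r => [|s r IH].
  by apply: shaped_ext (shaped0 t) => x a; rewrite big_nil.
have [Ps|NPs] := boolP (P s).
  by apply: shaped_ext (shapedD (shF s) IH) => x a; rewrite big_cons Ps.
by apply: shaped_ext IH => x a; rewrite big_cons (negPf NPs).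
Qed.

Lemma shaped_Ppow t b W : shaped t W -> shaped t (fun x a => Ppow N.+1 M b *m W x a).
Proof.
case: b => /=; last by apply: shaped_ext => x a; rewrite mul1mx.
move=> [C [L [C_deg _ eqW]]]; exists C, (fun=> pcoef0); split=> //.
  by move=> p; exact: pcoef_deg_lt0.
by move=> x a; rewrite eqW Pplus_shaped_vec.
Qed.

Lemma shaped_mu t W : (t < K)%N -> shaped t W -> shaped t.+1 (fun x a => mu_at x a *m W x a).
Proof.
move=> lt_tK [C [L [C_deg L_deg eqW]]].
exists (mu_top_coef L), (mu_bottom_coef C L); split.
- apply: pcoef_deg_ltZ; first exact: polynomial_coord.
  by apply: pcoef_deg_lt_sum => p; apply: pcoef_deg_ltX.
- move=> p; apply: pcoef_deg_ltD; apply: pcoef_deg_ltZ; try exact: polynomial_coord.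
    exact: pcoef_deg_ltW C_deg.
  exact: pcoef_deg_ltW (L_deg p).
- move=> x a; rewrite eqW mu_shaped_vec // => p e ep.
  by case: (L_deg p) => _ /(_ e p x); apply; rewrite ep.
Qed.

Lemma shaped_word m (F : 'I_m -> bool) t W : (t + m <= K)%N -> shaped t W ->
  shaped (t + m) (fun x a =>
    (\big[mulmx/1%:M]_(j < m) (mu_at x a *m Ppow N.+1 M (F j))) *m W x a).
Proof.
elim: m F t W => [|m IH] F t W le_tmK shW.
  by rewrite addn0; apply: shaped_ext shW => x a; rewrite big_ord0 mul1mx.
rewrite addnS; apply: shaped_ext.
  by move=> x a; rewrite big_ord_recl -!mulmxA.
apply: shaped_mu; first by rewrite -addnS.
apply: shaped_Ppow; apply: IH shW.
by apply: leq_trans le_tmK; rewrite leq_add2l.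
Qed.

Lemma shaped_Hml m l t W : (t + m <= K)%N -> shaped t W ->
  shaped (t + m) (fun x a => Hml N.+1 M m l (mu_at x a) *m W x a).
Proof.
move=> le_tmK shW.
have sh_term (s : {ffun 'I_m.+1 -> bool}) : shaped (t + m) (fun x a =>
    Ppow N.+1 M (s ord0) *m
    ((\big[mulmx/1%:M]_(j < m) (mu_at x a *m Ppow N.+1 M (s (lift ord0 j)))) *m W x a)).
  exact/shaped_Ppow/shaped_word.
apply: shaped_ext _ (shaped_sum (index_enum _)
  (fun s : {ffun 'I_m.+1 -> bool} => (\sum_(j < m.+1) s j)%N == l) sh_term) => x a.
by rewrite /Hml mulmx_suml; apply: eq_bigr => s _; rewrite mulmxA.
Qed.

Lemma shaped_alpha : shaped 0 (fun _ a => col_mx 0 (\col_p a p)).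
Proof.
exists pcoef0, (fun=> pcoef1); split=> [||x a].
- exact: pcoef_deg_lt0.
- by move=> p; exact: pcoef_deg_lt1.
- congr col_mx; apply/matrixP => i j; rewrite !mxE.
    by rewrite peval0 mulr0 if_same.
  by rewrite peval1 expr0 !mul1r.
Qed.

End MuAction.

Unset Implicit Arguments.

Theorem proposition4p1 (R : realType) (N M : nat) (hN : (0 < N)%N) (hM : (0 < M)%N)
  (n k : nat) (hn : (1 <= n)%N) (hk1 : (1 <= k)%N) (hk2 : (k <= n.+1)%N) :
  exists (K : nat) (c : 'I_M -> {ffun 'I_M -> 'I_K} -> 'rV[R]_(M.+1) -> R),
    (forall j e, smooth_on [set x : 'rV[R]_(M.+1) | 0 < x ord0 ord0] (c j e)) /\
    forall (x : 'rV[R]_(M.+1)) (alpha : 'I_M -> R[i]),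
      0 < x ord0 ord0 ->
      \sum_(j < M) `|alpha j| ^+ 2 = 1 ->
      let b : R[i] := (x ord0 ord0)%:C in
      let B : 'M[R[i]]_N := \matrix_(p < N, q < N)
                              (if ((p == q) && (nat_of_ord p == 0%N)) then b else 0) in
      let D : 'M[R[i]]_M := \matrix_(p < M, q < M)
                              (if p == q then 'i%C * (x ord0 (lift ord0 p))%:C else 0) in
      let u : 'M[R[i]]_(M, N) := \matrix_(p < M, q < N)
                              (if nat_of_ord q == 0%N then alpha p else 0) in
      let mu := mu_mx B D u in
      ('i%C ^+ n.+1 *: (minus_block (mu *m Hml N M n.-1 k.-1 mu) *m u))
      = \matrix_(p < M, q < N)
          (if nat_of_ord q == 0%N then
             'i%C * poly_evalC (c p ^~ x) (fun j => `|alpha j| ^+ 2) * alpha p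
           else 0).
Proof.
case: N hN => // N _.
have shV : shaped n n (fun (x : 'rV[R]_M.+1) a =>
    mu_at N x a *m (Hml N.+1 M n.-1 k.-1 (mu_at N x a) *m col_mx 0 (\col_p a p))).
  have shH := shaped_Hml (m := n.-1) (t := 0) k.-1 (leq_pred n) (shaped_alpha R N M n).
  by have := shaped_mu _ shH; rewrite add0n prednK //; apply.
have [C [L [_ L_deg eqV]]] := shV.
exists n.+1, (fun p => pcoefZ (fun=> (-1) ^+ n) (L p)); split.
  move=> p e; apply/polynomial_fun_smooth_on/polynomial_mul; first exact: polynomial_cst.
  by case: (L_deg p).
move=> x a _ _ b B D u mu.
rewrite mulmx_Umx /minus_block drsubmx_mul_col -mulmxA eqV col_mxKd.
apply/matrixP => p q; rewrite !mxE; case: ifP => _; last by rewrite mulr0.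
rewrite -[poly_evalC _ _]/(peval _ x (sqnorms a)) pevalZ rmorphXn rmorphN1.
have i_2n1 : 'i%C ^+ n.+1 * 'i%C ^+ n = 'i%C * (-1) ^+ n :> R[i].
  by rewrite exprS -mulrA -exprD addnn -mul2n exprM sqr_i.
by rewrite !mulrA i_2n1.
Qed.
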